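(* Let $S:\overline{\mathcal{D}}\to\widehat{\mathbb{C}}$ be a weak B-involution with $\mathcal{D}=\bigsqcup_{i=1}^k\Omega_i$, and let $\mathcal{G}$ be its welding graph. Then there is an edge between $v_{i_1}^-$ and $v_{i_2}^+$ if and only if there is an edge between $v_{i_1}^+$ and $v_{i_2}^-$.
   Context: $\Omega_1,\dots,\Omega_k$ are pairwise disjoint finitely connected proper subdomains of $\widehat{\mathbb{C}}$ with $\mathrm{int}(\overline{\Omega_i})=\Omega_i$; $X\subset\partial\mathcal{D}$ is finite and $\partial^0\mathcal{D}=\partial\mathcal{D}\setminus X$ is a finite union of disjoint non-singular real-analytic curves; $S$ is continuous on $\overline{\mathcal{D}}$, meromorphic on $\mathcal{D}$, maps $\partial\mathcal{D}$ to itself and $X$ to itself with $S\circ S=\mathrm{id}$ on $\partial\mathcal{D}$, and is orientation-reversing on $\partial^0\mathcal{D}$ (a weak B-involution). Put $\partial^0\Omega_i=\partial^0\mathcal{D}\cap\overline{\Omega_i}$. The welding graph $\mathcal{G}$ has vertices $v_1^\pm,\dots,v_k^\pm$, and $v_{i_1}^-$, $v_{i_2}^+$ are joined by an edge iff $S(\partial^0\Omega_{i_1})\cap\partial^0\Omega_{i_2}\neq\emptyset$ (these are the only edges). *)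

From HB Require Import structures.
From mathcomp Require Import all_boot all_order all_algebra.
From mathcomp Require Import reals.
From mathcomp Require Import complex.

Set Implicit Arguments.
Unset Strict Implicit.
Unset Printing Implicit Defensive.

Import Order.TTheory GRing.Theory Num.Theory.
Local Open Scope ring_scope.

(* The Riemann sphere  Ĉ = C ∪ {∞}, with None standing for ∞.          *)
Definition Csph (R : realType) := option R[i].

Definition cR {R : realType} (x : R) : R[i] := Complex x 0.
Definition ci {R : realType} : R[i] := Complex 0 1.

Definition sopen {R : realType} (U : Csph R -> Prop) : Prop :=
  forall p, U p ->
    match p with
    | Some z => exists2 r : R, 0 < r &
                  forall w : R[i], ComplexField.Normc.normc (w - z) < r -> U (Some w)
    | None => exists M : R, forall w : R[i], M < ComplexField.Normc.normc w -> U (Some w)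
    end.

Definition sclosure {R : realType} (A : Csph R -> Prop) (p : Csph R) : Prop :=
  forall U, sopen U -> U p -> exists q, U q /\ A q.

Definition sinterior {R : realType} (A : Csph R -> Prop) (p : Csph R) : Prop :=
  exists U, sopen U /\ U p /\ (forall q, U q -> A q).

Definition sboundary {R : realType} (A : Csph R -> Prop) (p : Csph R) : Prop :=
  sclosure A p /\ ~ sinterior A p.

Definition sconnected {R : realType} (A : Csph R -> Prop) : Prop :=
  forall U V, sopen U -> sopen V ->
    (forall p, A p -> U p \/ V p) ->
    (forall p, A p -> U p -> V p -> False) ->
    (exists p, A p /\ U p) -> (exists p, A p /\ V p) -> False.

Definition proper_domain {R : realType} (Om : Csph R -> Prop) : Prop :=
  [/\ sopen Om, sconnected Om, exists p, Om p & exists p, ~ Om p].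

Definition same_component {R : realType} (A : Csph R -> Prop) (p q : Csph R) :=
  exists K : Csph R -> Prop,
    [/\ sconnected K, forall x, K x -> A x, K p & K q].

Definition finitely_connected {R : realType} (Om : Csph R -> Prop) : Prop :=
  exists (n : nat) (c : nat -> Csph R), forall x, ~ Om x ->
    exists i, (i < n)%N /\ same_component (fun y => ~ Om y) (c i) x.

Definition chart {R : realType} (q x : Csph R) : option R[i] :=
  match q, x with
  | Some _, Some z => Some z
  | Some _, None => None
  | None, None => Some 0
  | None, Some z => if z == 0 then None else Some z^-1
  end.

Definition chart_inv {R : realType} (q : Csph R) (y : R[i]) : Csph R :=
  match q with
  | Some _ => Some y
  | None => if y == 0 then None else Some y^-1
  end.

Definition scontinuous_within {R : realType} (A : Csph R -> Prop)
    (f : Csph R -> Csph R) (p : Csph R) : Prop :=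
  forall V, sopen V -> V (f p) ->
    exists U, [/\ sopen U, U p & forall q, A q -> U q -> V (f q)].

(* f : Ĉ -> Ĉ is holomorphic at p (as a map of the Riemann sphere, i.e.
   meromorphic there): continuous at p and complex differentiable in the
   standard charts at p and at f p. *)
Definition sholo_at {R : realType} (f : Csph R -> Csph R) (p : Csph R) : Prop :=
  scontinuous_within (fun _ => True) f p /\
  exists u0 v0 l : R[i],
    [/\ chart p p = Some u0, chart (f p) (f p) = Some v0 &
     forall e : R, 0 < e -> exists2 d : R, 0 < d &
       forall u : R[i], 0 < ComplexField.Normc.normc (u - u0) < d ->
         exists v, chart (f p) (f (chart_inv p u)) = Some v /\
                   ComplexField.Normc.normc ((v - v0) / (u - u0) - l) < e].

Definition meromorphic_on {R : realType} (D : Csph R -> Prop)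
    (f : Csph R -> Csph R) : Prop :=
  forall p, D p -> sholo_at f p.

Definition ps_conv {R : realType} (a : nat -> R[i]) (x y : R[i]) : Prop :=
  forall e : R, 0 < e -> exists N : nat, forall m : nat, (N <= m)%N ->
    ComplexField.Normc.normc (\sum_(n < m) a n * x ^+ n - y) < e.

Definition ra_param {R : realType} (g : R -> Csph R) (a : nat -> R[i]) (r : R) :=
  [/\ 0 < r, a 1%N != 0 &
   forall s : R, `|s| < r ->
     exists y, chart (g 0) (g s) = Some y /\ ps_conv a (cR s) y].

Definition loc_param {R : realType} (G : Csph R -> Prop) (p : Csph R)
    (g : R -> Csph R) (a : nat -> R[i]) (r : R) : Prop :=
  [/\ g 0 = p, ra_param g a r,
   (forall s t : R, `|s| < r -> `|t| < r -> g s = g t -> s = t) &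
   exists U, [/\ sopen U, U p &
     forall x, (U x /\ G x) <-> exists t : R, `|t| < r /\ g t = x]].

Definition ra_curve {R : realType} (G : Csph R -> Prop) : Prop :=
  [/\ sconnected G, exists p, G p &
   forall p, G p -> exists g a r, loc_param G p g a r].

Definition finite_union_ra_curves {R : realType} (B : Csph R -> Prop) : Prop :=
  exists (n : nat) (G : nat -> Csph R -> Prop),
    [/\ forall i, (i < n)%N -> ra_curve (G i),
        forall i j x, (i < n)%N -> (j < n)%N -> G i x -> G j x -> i = j &
        forall x, B x <-> exists i, (i < n)%N /\ G i x].

(* The parametrization g (at g 0) has Om on its left side. *)
Definition left_in {R : realType} (Om : Csph R -> Prop) (g : R -> Csph R)
    (a : nat -> R[i]) : Prop :=
  exists u0, chart (g 0) (g 0) = Some u0 /\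
    exists2 d0 : R, 0 < d0 & forall d : R, 0 < d < d0 ->
      Om (chart_inv (g 0) (u0 + ci * cR d * a 1%N)).

Definition Dunion {R : realType} {k : nat} (Om : 'I_k -> Csph R -> Prop)
    (z : Csph R) : Prop := exists i, Om i z.

Definition bd0 {R : realType} {k : nat} (Om : 'I_k -> Csph R -> Prop)
    (X : Csph R -> Prop) (z : Csph R) : Prop :=
  sboundary (Dunion Om) z /\ ~ X z.

Definition bd0_comp {R : realType} {k : nat} (Om : 'I_k -> Csph R -> Prop)
    (X : Csph R -> Prop) (i : 'I_k) (z : Csph R) : Prop :=
  bd0 Om X z /\ sclosure (Om i) z.

(* S is orientation-reversing on ∂^0 D: each ∂^0 Ω_i carries the boundary
   orientation (Ω_i on the left), and S reverses it. *)
Definition orientation_reversing {R : realType} {k : nat}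
    (Om : 'I_k -> Csph R -> Prop) (X : Csph R -> Prop) (S : Csph R -> Csph R) :=
  forall (i j : 'I_k) (p : Csph R) g a r h b rho,
    bd0_comp Om X i p -> bd0_comp Om X j (S p) ->
    loc_param (bd0 Om X) p g a r -> left_in (Om i) g a ->
    loc_param (bd0 Om X) (S p) h b rho -> left_in (Om j) h b ->
    exists2 eps : R, 0 < eps & exists phi : R -> R,
      [/\ phi 0 = 0,
          forall s t : R, - eps < s -> s < t -> t < eps -> phi t < phi s &
          forall t : R, `|t| < eps -> S (g t) = h (phi t)].

Definition weak_B_involution {R : realType} {k : nat}
    (Om : 'I_k -> Csph R -> Prop) (X : Csph R -> Prop) (S : Csph R -> Csph R)
    : Prop :=
  [/\
      forall i, [/\ proper_domain (Om i), finitely_connected (Om i) &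
                    forall z, sinterior (sclosure (Om i)) z <-> Om i z],
      forall i j z, Om i z -> Om j z -> i = j,
      (exists s : seq (Csph R), forall z, X z <-> z \in s) /\
        (forall z, X z -> sboundary (Dunion Om) z),
      finite_union_ra_curves (bd0 Om X) &
      [/\
          forall z, sclosure (Dunion Om) z ->
                    scontinuous_within (sclosure (Dunion Om)) S z,
          meromorphic_on (Dunion Om) S,
          forall z, sboundary (Dunion Om) z ->
                    sboundary (Dunion Om) (S z) /\ S (S z) = z,
          forall z, X z -> X (S z) &
          orientation_reversing Om X S]].

(* The welding graph: vertices v_i^- = (i, false), v_i^+ = (i, true).  *)
Definition weld_cond {R : realType} {k : nat} (Om : 'I_k -> Csph R -> Prop)
    (X : Csph R -> Prop) (S : Csph R -> Csph R) (i1 i2 : 'I_k) : Prop :=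
  exists z, bd0_comp Om X i1 z /\ bd0_comp Om X i2 (S z).

Definition welding_edge {R : realType} {k : nat} (Om : 'I_k -> Csph R -> Prop)
    (X : Csph R -> Prop) (S : Csph R -> Csph R) (u v : 'I_k * bool) : Prop :=
  match u, v with
  | (i1, false), (i2, true) => weld_cond Om X S i1 i2
  | (i2, true), (i1, false) => weld_cond Om X S i1 i2
  | _, _ => False
  end.

From HB Require Import structures.
From mathcomp Require Import all_boot all_order all_algebra.
From mathcomp Require Import reals.
From mathcomp Require Import complex.

Lemma weak_B_involution_boundary_involutive (R : realType) (k : nat)
    (Om : 'I_k -> Csph R -> Prop) (X : Csph R -> Prop) (S : Csph R -> Csph R) :
  weak_B_involution Om X S ->
  forall z, sboundary (Dunion Om) z -> S (S z) = z.
Proof. by move=> [_ _ _ _ [_ _ SbdD _ _]] z /SbdD []. Qed.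

Lemma weld_cond_sym (R : realType) (k : nat) (Om : 'I_k -> Csph R -> Prop)
    (X : Csph R -> Prop) (S : Csph R -> Csph R) (i1 i2 : 'I_k) :
  (forall z, sboundary (Dunion Om) z -> S (S z) = z) ->
  weld_cond Om X S i1 i2 -> weld_cond Om X S i2 i1.
Proof.
move=> SSz [z [bd_z bd_Sz]]; exists (S z); split=> //.
by rewrite SSz //; case: bd_z => [[]].
Qed.

Theorem lemma4p11 (R : realType) (k : nat) (Om : 'I_k -> Csph R -> Prop)
    (X : Csph R -> Prop) (S : Csph R -> Csph R) (i1 i2 : 'I_k) :
  weak_B_involution Om X S ->
  (welding_edge Om X S (i1, false) (i2, true) <->
   welding_edge Om X S (i1, true) (i2, false)).
Proof.
move=> /weak_B_involution_boundary_involutive SSz /=.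
by split; apply: weld_cond_sym.
Qed.
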